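(* Let $F$ be a non-archimedean local field of characteristic not $2$ with valuation ring $\mathfrak{o}$ and maximal ideal $\mathfrak{p}$, let $\lambda\in\mathfrak{o}$ with $ord_\mathfrak{p}(\lambda)\in\{0,1\}$, and let $H=Mat(2,F)$ with the involution $$\begin{pmatrix} a & b\\ c& d\end{pmatrix}^{\ddagger_\lambda}=\begin{pmatrix} a & c/\lambda\\ b\lambda & d\end{pmatrix}.$$ Suppose $\Lambda$ is a lattice in $F^2$ which has an orthogonal basis with respect to $b$. Then there exists $g\in GO(Mat(2,F),\ddagger_\lambda)$ such that $$End(\Lambda)\cap End(\Lambda^\sharp)\subset g\bigl(Mat(2,\mathfrak{o})\cap Mat(2,\mathfrak{o})^{\ddagger_\lambda}\bigr)g^{-1}.$$
   Context: Here $b$ is the symmetric bilinear form on $F^2$ given by $b((x_1,y_1),(x_2,y_2))=\lambda x_1x_2+y_1y_2$, whose adjoint involution is $\ddagger_\lambda$ (i.e. $b(v,\sigma w)=b(\sigma^{\ddagger_\lambda}v,w)$). A lattice is a finitely generated $\mathfrak{o}$-submodule spanning $F^2$; $\Lambda^\sharp=\{v: b(v,\Lambda)\subset\mathfrak{o}\}$; $End(\Lambda)=\{\sigma\in Mat(2,F):\sigma\Lambda\subset\Lambda\}$; $X^{\ddagger_\lambda}=\{x^{\ddagger_\lambda}:x\in X\}$. $GO(Mat(2,F),\ddagger_\lambda)=\{x\in GL(2,F): x^{\ddagger_\lambda}x\in F\}$. *)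

From HB Require Import structures.
From mathcomp Require Import all_boot all_order all_algebra.
Set Implicit Arguments. Unset Strict Implicit. Unset Printing Implicit Defensive.
Import Order.TTheory GRing.Theory Num.Theory.
Local Open Scope ring_scope.

Section LocalField.
Variable F : fieldType.
Variable v : F -> int.  (* normalized discrete valuation, meaningful on F^x *)

Definition in_pk (k : int) (x : F) : Prop := x = 0 \/ (k <= v x).
Definition intg (x : F) : Prop := in_pk 0 x.
Definition in_p (x : F) : Prop := in_pk 1 x.

Record nonarch_local_field : Prop := {
  v_mul : forall x y, x != 0 -> y != 0 -> v (x * y) = v x + v y;
  v_add : forall x y, x != 0 -> y != 0 -> x + y != 0 ->
            Num.min (v x) (v y) <= v (x + y);
  v_unif : exists pi : F, pi != 0 /\ v pi = 1;
  v_complete : forall u : nat -> F,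
      (forall k : int, exists N, forall m n, (N <= m)%N -> (N <= n)%N ->
          in_pk k (u m - u n)) ->
      exists l : F, forall k : int, exists N, forall n, (N <= n)%N ->
          in_pk k (u n - l);
  v_res_finite : exists s : seq F, (forall r, r \in s -> intg r) /\
      forall x, intg x -> exists2 r, r \in s & in_p (x - r)
}.

Variable lam : F.

Definition dag (x : 'M[F]_2) : 'M[F]_2 :=
  \matrix_(i < 2, j < 2)
    if (val i == 0%N) && (val j == 0%N) then x 0 0
    else if (val i == 0%N) && (val j == 1%N) then x 1 0 / lam
    else if (val i == 1%N) && (val j == 0%N) then x 0 1 * lam
    else x 1 1.

Definition bform (u w : 'cV[F]_2) : F := lam * u 0 0 * w 0 0 + u 1 0 * w 1 0.

Definition is_lattice (L : 'cV[F]_2 -> Prop) : Prop :=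
  (exists (n : nat) (g : 'I_n -> 'cV[F]_2),
      forall x, L x <-> exists c : 'I_n -> F, (forall i, intg (c i)) /\
                         x = \sum_i c i *: g i) /\
  (forall w : 'cV[F]_2, exists (n : nat) (u : 'I_n -> 'cV[F]_2) (c : 'I_n -> F),
      (forall i, L (u i)) /\ w = \sum_i c i *: u i).

Definition has_orth_basis (L : 'cV[F]_2 -> Prop) : Prop :=
  exists e1 e2 : 'cV[F]_2,
    (forall x, L x <-> exists a c, intg a /\ intg c /\ x = a *: e1 + c *: e2) /\
    (forall a c : F, a *: e1 + c *: e2 = 0 -> a = 0 /\ c = 0) /\
    bform e1 e2 = 0.

Definition dual_lattice (L : 'cV[F]_2 -> Prop) : 'cV[F]_2 -> Prop :=
  fun u => forall w, L w -> intg (bform u w).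

Definition EndL (L : 'cV[F]_2 -> Prop) (s : 'M[F]_2) : Prop :=
  forall u, L u -> L (s *m u).

Definition intmx (x : 'M[F]_2) : Prop := forall i j, intg (x i j).

Definition GO (g : 'M[F]_2) : Prop :=
  g \in unitmx /\ exists c : F, dag g *m g = c%:M.

End LocalField.

From HB Require Import structures.
From mathcomp Require Import all_boot all_order all_algebra.
From mathcomp Require Import ring zify.
Import Order.TTheory GRing.Theory Num.Theory.
Set Implicit Arguments. Unset Strict Implicit. Unset Printing Implicit Defensive.
Local Open Scope ring_scope.

(* Let (e1, e2) be a b-orthogonal o-basis of the lattice, a_i = b(e_i, e_i) and
   d = det(e1 e2); orthogonality gives a1 a2 = lam d^2.  The matrix g with
   columns (a2/d) e1 and e2 satisfies g^dag g = a2, so g is a similitude.  If s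
   stabilises the lattice, its matrix (t_ij) in the basis (e1, e2) is integral;
   if s also stabilises the dual lattice, spanned by e1/a1 and e2/a2, then
   t10 a2/a1 and t01 a1/a2 are integral as well.  In the basis ((a2/d) e1, e2)
   the off-diagonal entries of s become x01 = t01 d/a2 and x10 = t10 a2/d, and
   lam x01^2 = t01 (t01 a1/a2) and lam (x10/lam)^2 = t10 (t10 a2/a1) are
   integral.  As ord(lam) <= 1, this forces x01 and x10/lam to be integral,
   i.e. g^-1 s g lies in Mat(2,o) and in Mat(2,o)^dag. *)

Section Matrix2.
Variable F : fieldType.

Lemma ord2P (i : 'I_2) : i = 0 \/ i = 1.
Proof. by case: i => [[|[|i]] Hi]; [left; exact: val_inj | right; exact: val_inj |]. Qed.

Lemma big_ord2 (f : 'I_2 -> F) : \sum_(i < 2) f i = f 0 + f 1.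
Proof. by rewrite big_ord_recl big_ord1; congr (_ + f _); exact: val_inj. Qed.

Lemma mx2_ext (A B : 'M[F]_2) :
  A 0 0 = B 0 0 -> A 0 1 = B 0 1 -> A 1 0 = B 1 0 -> A 1 1 = B 1 1 -> A = B.
Proof.
move=> h00 h01 h10 h11; apply/matrixP => i j.
by case: (ord2P i) => ->; case: (ord2P j) => ->.
Qed.

Definition mx22 (a b c d : F) : 'M[F]_2 :=
  \matrix_(i, j) if i == 0 then (if j == 0 then a else b)
                 else (if j == 0 then c else d).

Definition cols_mx (u w : 'cV[F]_2) : 'M[F]_2 :=
  \matrix_(i, j) if j == 0 then u i 0 else w i 0.

Lemma mul_mx_cols (A : 'M[F]_2) u w : A *m cols_mx u w = cols_mx (A *m u) (A *m w).
Proof.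
apply/matrixP => i j; rewrite !mxE.
by case: (ord2P j) => -> /=; apply: eq_bigr => k _; rewrite mxE.
Qed.

Lemma mul_cols_mx u w (B : 'M[F]_2) :
  cols_mx u w *m B = cols_mx (B 0 0 *: u + B 1 0 *: w) (B 0 1 *: u + B 1 1 *: w).
Proof.
apply/matrixP => i j; rewrite !mxE big_ord2 !mxE /=.
by case: (ord2P j) => -> /=; rewrite mulrC [w i 0 * _]mulrC.
Qed.

Lemma mul_cols_cV u w (c : 'cV[F]_2) :
  cols_mx u w *m c = c 0 0 *: u + c 1 0 *: w.
Proof.
apply/matrixP => i j; rewrite !mxE big_ord2 !mxE /= (ord1 j).
by rewrite mulrC [w i 0 * _]mulrC.
Qed.

Lemma det_cols_mx u w : \det (cols_mx u w) = u 0 0 * w 1 0 - w 0 0 * u 1 0.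
Proof.
rewrite (expand_det_col _ 0) big_ord2 /cofactor !det_mx11 !mxE /=.
rewrite (_ : lift 0 0 = 1); last exact: val_inj.
by rewrite (_ : lift 1 0 = 0); [ring | exact: val_inj].
Qed.

Lemma det_cols_mx_neq0 u w :
  (forall a c, a *: u + c *: w = 0 -> a = 0 /\ c = 0) -> \det (cols_mx u w) != 0.
Proof.
move=> free; rewrite -det_tr; apply/det0P => -[r r_neq0].
move/(congr1 trmx); rewrite trmx_mul trmxK trmx0 mul_cols_cV !mxE.
case/free=> r0 r1; move/eqP: r_neq0; apply; apply/rowP => j.
by rewrite mxE; case: (ord2P j) => ->.
Qed.

Lemma dag_mx22 (lam : F) a b c d : dag lam (mx22 a b c d) = mx22 a (c / lam) (b * lam) d.
Proof. by apply: mx2_ext; rewrite !mxE. Qed.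

Lemma dagK (lam : F) : lam != 0 -> involutive (dag lam).
Proof. by move=> lam0 x; apply: mx2_ext; rewrite !mxE //= ?mulfK ?divfK. Qed.

Lemma bformC (lam : F) u w : bform lam u w = bform lam w u.
Proof. by rewrite /bform; ring. Qed.

Lemma bformZl (lam k : F) u w : bform lam (k *: u) w = k * bform lam u w.
Proof. by rewrite /bform !mxE; ring. Qed.

Lemma bformZr (lam k : F) u w : bform lam u (k *: w) = k * bform lam u w.
Proof. by rewrite bformC bformZl bformC. Qed.

Lemma bformDr (lam : F) u w w' : bform lam u (w + w') = bform lam u w + bform lam u w'.
Proof. by rewrite /bform !mxE; ring. Qed.

Lemma bform_lagrange (lam : F) u w :
  bform lam u u * bform lam w w = bform lam u w ^+ 2 + lam * \det (cols_mx u w) ^+ 2.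
Proof. by rewrite det_cols_mx /bform; ring. Qed.

Lemma dag_mul_cols (lam : F) u w : lam != 0 ->
  dag lam (cols_mx u w) *m cols_mx u w =
  mx22 (bform lam u u / lam) (bform lam u w / lam) (bform lam w u) (bform lam w w).
Proof.
by move=> lam0; apply: mx2_ext; rewrite !mxE big_ord2 !mxE /= /bform; field.
Qed.

End Matrix2.

Section Valuation.
Variables (F : fieldType) (v : F -> int).
Hypothesis v_mul : forall x y : F, x != 0 -> y != 0 -> v (x * y) = v x + v y.

Lemma intg1 : intg v 1.
Proof.
right; have : v 1 = v 1 + v 1 by rewrite -v_mul ?oner_neq0 ?mulr1.
lia.
Qed.

Lemma intgM x y : intg v x -> intg v y -> intg v (x * y).
Proof.
have [-> _ _|x0] := eqVneq x 0; first by left; rewrite mul0r.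
have [-> _ _|y0] := eqVneq y 0; first by left; rewrite mulr0.
case=> [/eqP|hx]; first by rewrite (negPf x0).
case=> [/eqP|hy]; first by rewrite (negPf y0).
by right; rewrite v_mul //; lia.
Qed.

Lemma intg_of_scaled_sqr lam x : lam != 0 -> v lam <= 1 ->
  intg v (lam * x ^+ 2) -> intg v x.
Proof.
move=> lam0 lam_le1; have [-> _|x0] := eqVneq x 0; first by left.
case=> [/eqP|]; first by rewrite mulf_eq0 expf_eq0 (negPf lam0) (negPf x0).
by rewrite v_mul ?expf_neq0 // expr2 v_mul // => ?; right; lia.
Qed.

Lemma intmx_mx22 a b c d : intg v a -> intg v b -> intg v c -> intg v d ->
  intmx v (mx22 a b c d).
Proof.
by move=> ha hb hc hd i j; rewrite mxE; case: (ord2P i) => ->; case: (ord2P j) => ->.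
Qed.

End Valuation.

Section OrthogonalBasis.
Variables (F : fieldType) (v : F -> int) (lam : F) (e1 e2 : 'cV[F]_2).
Hypothesis lam_neq0 : lam != 0.
Hypothesis e_free : forall a c : F, a *: e1 + c *: e2 = 0 -> a = 0 /\ c = 0.
Hypothesis e_orth : bform lam e1 e2 = 0.
Hypothesis v_mul : forall x y : F, x != 0 -> y != 0 -> v (x * y) = v x + v y.
Hypothesis lam_v : v lam = 0 \/ v lam = 1.
Variable L : 'cV[F]_2 -> Prop.
Hypothesis L_span : forall x,
  L x <-> exists a c, intg v a /\ intg v c /\ x = a *: e1 + c *: e2.

Let a1 := bform lam e1 e1.
Let a2 := bform lam e2 e2.
Let d := \det (cols_mx e1 e2).
Let q := a2 / d.

Lemma gram_det : a1 * a2 = lam * d ^+ 2.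
Proof. by rewrite bform_lagrange e_orth expr0n add0r. Qed.

Lemma det_basis_neq0 : d != 0.
Proof. exact: det_cols_mx_neq0. Qed.

Lemma gram_neq0 : a1 != 0 /\ a2 != 0.
Proof.
have : a1 * a2 != 0 by rewrite gram_det mulf_neq0 ?expf_neq0 ?det_basis_neq0.
by rewrite mulf_eq0 negb_or => /andP.
Qed.

Lemma similitude_scale_neq0 : q != 0.
Proof. by have [_ a2_neq0] := gram_neq0; rewrite mulf_neq0 ?invr_eq0 ?det_basis_neq0. Qed.

Lemma similitude_scale_sqr : q ^+ 2 * a1 = lam * a2.
Proof.
have [a1_neq0 a2_neq0] := gram_neq0; have d_neq0 := det_basis_neq0.
rewrite (_ : lam * a2 = a2 * (lam * d ^+ 2) / d ^+ 2); last by field.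
by rewrite -gram_det /q; field.
Qed.

Definition similitude := cols_mx (q *: e1) e2.

Lemma dag_similitude : dag lam similitude *m similitude = a2%:M.
Proof.
rewrite dag_mul_cols // !bformZl !bformZr [bform _ e2 e1]bformC e_orth.
rewrite mulrA -expr2 similitude_scale_sqr mulrC mulKf // !mulr0 mul0r.
by apply: mx2_ext; rewrite !mxE.
Qed.

Lemma similitude_unit : similitude \in unitmx.
Proof.
have [_ a2_neq0] := gram_neq0.
have [] := @mulmx1_unit _ _ (a2^-1 *: dag lam similitude) similitude => //.
by rewrite -scalemxAl dag_similitude scale_scalar_mx mulVf.
Qed.

Lemma GO_similitude : GO lam similitude.
Proof. by split; [exact: similitude_unit | exists a2; exact: dag_similitude]. Qed.

Lemma similitude_conj s t00 t10 t01 t11 :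
  s *m e1 = t00 *: e1 + t10 *: e2 -> s *m e2 = t01 *: e1 + t11 *: e2 ->
  s = similitude *m mx22 t00 (t01 / q) (q * t10) t11 *m invmx similitude.
Proof.
move=> se1 se2; rewrite -[s](mulmxK similitude_unit); congr (_ *m _).
rewrite mul_mx_cols mul_cols_mx !mxE /= -scalemxAr se1 se2.
by congr cols_mx; rewrite ?scalerDr !scalerA ?divfK ?similitude_scale_neq0 // mulrC.
Qed.

Lemma similitude_conj_intmx t00 t10 t01 t11 :
  intg v t00 -> intg v t10 -> intg v t01 -> intg v t11 ->
  intg v (t10 * a2 / a1) -> intg v (t01 * a1 / a2) ->
  let x := mx22 t00 (t01 / q) (q * t10) t11 in intmx v x /\ intmx v (dag lam x).
Proof.
move=> i00 i10 i01 i11 j10 j01 x.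
have [a1_neq0 a2_neq0] := gram_neq0; have q_neq0 := similitude_scale_neq0.
have lam_le1 : v lam <= 1 by case: lam_v => ->.
have intg_lam : intg v lam by right; case: lam_v => ->.
have lamE : lam = q ^+ 2 * a1 / a2 by rewrite similitude_scale_sqr mulfK.
have i01q : intg v (t01 / q).
  apply: (intg_of_scaled_sqr v_mul lam_neq0 lam_le1).
  suff -> : lam * (t01 / q) ^+ 2 = t01 * (t01 * a1 / a2) by exact: intgM.
  by rewrite lamE; field; rewrite a2_neq0 q_neq0.
have i10q : intg v (q * t10 / lam).
  apply: (intg_of_scaled_sqr v_mul lam_neq0 lam_le1).
  suff -> : lam * (q * t10 / lam) ^+ 2 = t10 * (t10 * a2 / a1) by exact: intgM.
  by rewrite lamE; field; rewrite a1_neq0 a2_neq0 q_neq0.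
rewrite /x dag_mx22; split; apply: intmx_mx22 => //; last exact: intgM.
by rewrite -(divfK lam_neq0 (q * t10)); exact: intgM.
Qed.

Lemma basis_in_lattice : L e1 /\ L e2.
Proof.
have i1 := intg1 v_mul; have i0 : intg v 0 by left.
split; apply/L_span; [exists 1, 0 | exists 0, 1];
  by rewrite scale1r scale0r ?addr0 ?add0r.
Qed.

Lemma bform_basis a c :
  bform lam e1 (a *: e1 + c *: e2) = a * a1 /\ bform lam e2 (a *: e1 + c *: e2) = c * a2.
Proof.
rewrite !bformDr !bformZr e_orth [bform _ e2 e1]bformC e_orth.
by rewrite !mulr0 addr0 add0r.
Qed.

Lemma dual_basis :
  dual_lattice v lam L (a1^-1 *: e1) /\ dual_lattice v lam L (a2^-1 *: e2).
Proof.
have [a1_neq0 a2_neq0] := gram_neq0.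
split=> w /L_span [a [c [ia [ic ->]]]]; have [E1 E2] := bform_basis a c;
  by rewrite bformZl ?E1 ?E2 mulrC mulfK.
Qed.

Lemma EndL_dual_coef s t00 t10 t01 t11 :
  EndL (dual_lattice v lam L) s ->
  s *m e1 = t00 *: e1 + t10 *: e2 -> s *m e2 = t01 *: e1 + t11 *: e2 ->
  intg v (t10 * a2 / a1) /\ intg v (t01 * a1 / a2).
Proof.
move=> sL' se1 se2; have [Le1 Le2] := basis_in_lattice; have [De1 De2] := dual_basis.
have := sL' _ De1 _ Le2; have := sL' _ De2 _ Le1.
rewrite -!scalemxAr se1 se2 !bformZl ![bform _ (_ + _) _]bformC.
case: (bform_basis t00 t10) => _ ->; case: (bform_basis t01 t11) => -> _.
by rewrite ![_^-1 * _]mulrC.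
Qed.

Lemma similitude_conj_integral s t00 t10 t01 t11 :
  intg v t00 -> intg v t10 -> intg v t01 -> intg v t11 ->
  EndL (dual_lattice v lam L) s ->
  s *m e1 = t00 *: e1 + t10 *: e2 -> s *m e2 = t01 *: e1 + t11 *: e2 ->
  exists x, (intmx v x /\ exists y, intmx v y /\ x = dag lam y) /\
            s = similitude *m x *m invmx similitude.
Proof.
move=> i00 i10 i01 i11 sL' se1 se2.
have [j10 j01] := EndL_dual_coef sL' se1 se2.
have [xI dxI] := similitude_conj_intmx i00 i10 i01 i11 j10 j01.
exists (mx22 t00 (t01 / q) (q * t10) t11); split; last exact: similitude_conj.
by split=> //; exists (dag lam (mx22 t00 (t01 / q) (q * t10) t11)); rewrite dagK.
Qed.

End OrthogonalBasis.

Theorem lemma5p5 (F : fieldType) (v : F -> int)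
  (HF : nonarch_local_field v) (Hchar : (2%:R : F) != 0)
  (lam : F) (Hlam0 : lam != 0) (Hlamv : v lam = 0 \/ v lam = 1)
  (L : 'cV[F]_2 -> Prop) (HL : is_lattice v L) (Horth : has_orth_basis v lam L) :
  exists g : 'M[F]_2, GO lam g /\
    forall s : 'M[F]_2, EndL L s -> EndL (dual_lattice v lam L) s ->
      exists x : 'M[F]_2,
        (intmx v x /\ exists y : 'M[F]_2, intmx v y /\ x = dag lam y) /\
        s = g *m x *m invmx g.
Proof.
have [e1 [e2 [L_span [e_free e_orth]]]] := Horth.
have v_mul := v_mul HF.
have [Le1 Le2] := basis_in_lattice v_mul L_span.
exists (similitude lam e1 e2); split; first exact: GO_similitude Hlam0 e_free e_orth.
move=> s sL sL'.
have /L_span [t00 [t10 [i00 [i10 se1]]]] := sL _ Le1.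
have /L_span [t01 [t11 [i01 [i11 se2]]]] := sL _ Le2.
exact: (similitude_conj_integral Hlam0 e_free e_orth v_mul Hlamv L_span
          i00 i10 i01 i11 sL' se1 se2).
Qed.
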